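(* Let $\mathcal{F}$ be a complete lattice cone of functions on a set $\Omega$ which contains all real constant functions. Let $p\in\mathcal{F}$ be real-valued and let $\xi\colon\mathbb{R}\to\mathbb{R}$ be convex and non-decreasing. Then $\xi\circ p\in\mathcal{F}$.
   Context: A complete lattice cone is a set of functions on $\Omega$ with values in $(-\infty,\infty]$, closed under nonnegative linear combinations and under pointwise suprema of arbitrary families. *)

From HB Require Import structures.
From mathcomp Require Import all_boot all_order all_algebra.
From mathcomp Require Import all_classical all_reals all_analysis.
Set Implicit Arguments. Unset Strict Implicit. Unset Printing Implicit Defensive.
Import Order.TTheory GRing.Theory Num.Theory.
Local Open Scope classical_set_scope.
Local Open Scope ring_scope.
Local Open Scope ereal_scope.

(* A complete lattice cone on Omega: a set of functions Omega -> (-oo, +oo]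
   closed under nonnegative linear combinations (with 0 * +oo = 0, the
   convention of \bar R) and under pointwise suprema of arbitrary
   (nonempty) families. *)
Definition complete_lattice_cone (R : realType) (Omega : Type)
    (F : set (Omega -> \bar R)) : Prop :=
  [/\ (forall f, F f -> forall x, f x != -oo),
      F (fun _ => 0),
      (forall (f g : Omega -> \bar R) (a b : R), F f -> F g ->
          (0 <= a)%R -> (0 <= b)%R ->
          F (fun x => a%:E * f x + b%:E * g x)) &
      (forall G : set (Omega -> \bar R), G !=set0 -> G `<=` F ->
          F (fun x => ereal_sup [set g x | g in G]))].

From HB Require Import structures.
From mathcomp Require Import all_boot all_order all_algebra.
From mathcomp Require Import all_classical all_reals all_analysis.
From mathcomp Require Import ring lra.
Import Order.TTheory GRing.Theory Num.Theory.
Local Open Scope classical_set_scope.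
Local Open Scope ring_scope.

(* A convex non-decreasing xi : R -> R is the pointwise supremum of the affine
   functions t |-> a * t + b with slope a >= 0 lying below it: at every point
   t0 a supporting line of slope sup of the left difference quotients touches
   the graph, and monotonicity makes that slope nonnegative.  Composing with p,
   xi o p is therefore the supremum of the family of functions a * p + b with
   (a, b) ranging over these affine minorants.  Each such function lies in a
   cone F containing p and the constants (it is the nonnegative combination
   a * p + 1 * b), and F is closed under arbitrary suprema, so xi o p is in F. *)

Section ConvexReal.
Context {R : realType}.
Variable xi : R -> R.
Hypothesis xi_convex : convex_function (R := R) (E := R^o) setT xi.

Lemma convex_chord {s t u} : s < t -> t < u ->
  (u - s) * xi t <= (u - t) * xi s + (t - s) * xi u.
Proof.
move=> st tu.
have us : 0 < u - s by lra.
have usn : u - s != 0 by rewrite gt_eqF.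
have l0 : 0 <= (u - t) / (u - s) by apply: divr_ge0; lra.
have l1 : (u - t) / (u - s) <= 1 by rewrite ler_pdivrMr //; lra.
have := xi_convex (Itv01 l0 l1) s u (mem_set I) (mem_set I).
rewrite /= !convRE /=.
have -> : conv (Itv01 l0 l1) (s : convex_lmodType R^o) u = t.
  rewrite /conv /= /GRing.scale /=.
  change ((u - t) / (u - s) * s + (1 - (u - t) / (u - s)) * u = t :> R).
  by field.
rewrite /unstable.onem => /(ler_wpM2l (ltW us)).
suff -> : (u - s) * ((u - t) / (u - s) * xi s + (1 - (u - t) / (u - s)) * xi u)
   = (u - t) * xi s + (t - s) * xi u by [].
by field.
Qed.

Lemma convex_slope_le s t u : s < t -> t < u ->
  (xi t - xi s) / (t - s) <= (xi u - xi t) / (u - t).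
Proof.
move=> st tu; have := convex_chord st tu.
have ts : 0 < t - s by lra.
have ut : 0 < u - t by lra.
rewrite ler_pdivrMr // mulrAC ler_pdivlMr // => chord.
nra.
Qed.

Hypothesis xi_nondecr : {homo xi : x y / x <= y}.

(* Supporting line at t0 with nonnegative slope: the slope is the supremum of
   the left difference quotients at t0, which are nonnegative by monotonicity
   and bounded above by every right difference quotient. *)
Lemma convex_support_line t0 :
  exists a, 0 <= a /\ forall t, xi t0 + a * (t - t0) <= xi t.
Proof.
pose L := [set (xi t0 - xi s) / (t0 - s) | s in [set s | s < t0]].
have right_ub u : t0 < u -> ubound L ((xi u - xi t0) / (u - t0)).
  by move=> t0u _ [s /= st <-]; exact: convex_slope_le.
have L1 : L ((xi t0 - xi (t0 - 1)) / (t0 - (t0 - 1))).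
  by exists (t0 - 1) => //=; lra.
have supL : has_sup L.
  split; first by exists ((xi t0 - xi (t0 - 1)) / (t0 - (t0 - 1))).
  by exists ((xi (t0 + 1) - xi t0) / (t0 + 1 - t0)); apply: right_ub; lra.
exists (sup L); split.
  apply: le_trans (sup_upper_bound supL L1).
  by apply: divr_ge0; [rewrite subr_ge0; apply: xi_nondecr|]; lra.
move=> t; case: (ltgtP t t0) => [tt0|t0t|->]; last by rewrite subrr mulr0 addr0.
- have Lt : L ((xi t0 - xi t) / (t0 - t)) by exists t.
  have := sup_upper_bound supL Lt.
  rewrite ler_pdivrMr; [nra | lra].
- have := ge_sup (ex_intro _ _ L1) (right_ub t t0t).
  rewrite ler_pdivlMr; [nra | lra].
Qed.

Definition nonneg_affine_minorants : set (R * R) :=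
  [set ab | 0 <= ab.1 /\ forall t, ab.1 * t + ab.2 <= xi t].

Lemma convex_nondecr_envelope t :
  (xi t)%:E =
  ereal_sup [set (ab.1 * t + ab.2)%:E | ab in nonneg_affine_minorants].
Proof.
apply: le_anti; apply/andP; split.
  have [a [a0 supp]] := convex_support_line t.
  apply: ereal_sup_ubound; exists (a, xi t - a * t); last by rewrite /= addrC subrK.
  by split => // s /=; have := supp s; lra.
by apply: ge_ereal_sup => _ [ab [_ below] <-]; rewrite lee_fin.
Qed.

End ConvexReal.

Lemma cone_nonneg_affine (R : realType) (Omega : Type)
    (F : set (Omega -> \bar R)) (p : Omega -> R) (a b : R) :
  complete_lattice_cone F -> (forall c : R, F (fun _ => c%:E)) ->
  F (fun x => (p x)%:E) -> 0 <= a -> F (fun x => (a * p x + b)%:E).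
Proof.
case=> _ _ Flin _ Fconst Fp a0.
have := Flin _ _ a 1 Fp (Fconst b) a0 ler01.
by congr F; apply: funext => x; rewrite mul1e -EFinM -EFinD.
Qed.

Theorem mainTheorem6 (R : realType) (Omega : Type) (F : set (Omega -> \bar R))
  (p : Omega -> R) (xi : R -> R) :
  complete_lattice_cone F ->
  (forall c : R, F (fun _ => c%:E)) ->
  F (fun x => (p x)%:E) ->
  convex_function (R := R) (E := R^o) setT xi ->
  {homo xi : x y / x <= y} ->
  F (fun x => (xi (p x))%:E).
Proof.
move=> Fcone Fconst Fp xi_convex xi_nondecr.
pose M := nonneg_affine_minorants xi.
pose G := [set (fun x => (ab.1 * p x + ab.2)%:E) | ab in M].
have GF : G `<=` F.
  by move=> _ [ab [a0 _] <-]; exact: cone_nonneg_affine.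
have G0 : G !=set0.
  have [a [a0 supp]] := convex_support_line xi xi_convex xi_nondecr 0.
  exists (fun x => (a * p x + xi 0)%:E), (a, xi 0) => //.
  by split => // t /=; have := supp t; rewrite subr0 addrC.
suff -> : (fun x => (xi (p x))%:E) = (fun x => ereal_sup [set g x | g in G]).
  by case: Fcone => _ _ _ Fsup; exact: Fsup.
apply: funext => x; rewrite (convex_nondecr_envelope xi xi_convex xi_nondecr).
by rewrite image_comp; congr (ereal_sup _); exact: eq_imagel.
Qed.
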